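(* Let $\mathcal{X}_1,\mathcal{X}_2$ be non-empty sets, $\mathcal{B}_1\subseteq\mathcal{P}(\mathcal{X}_1)\setminus\{\emptyset\}$, $\mathcal{B}_2\subseteq\mathcal{P}(\mathcal{X}_2)\setminus\{\emptyset\}$ (arbitrary, possibly empty), and for $i\in\{1,2\}$ let $\underline{P}_i$ be a coherent conditional lower prevision on $\mathcal{C}_i\subseteq\mathcal{C}(\mathcal{X}_i)$ with natural extension $\underline{E}_i$ to $\mathcal{C}(\mathcal{X}_i)$. Then for any $f\in\mathcal{G}(\mathcal{X}_1)$ and $h\in\mathcal{G}(\mathcal{X}_2)$, $$(\underline{P}_1\otimes\underline{P}_2)(f+h)=\underline{E}_1(f)+\underline{E}_2(h).$$
   Context: Gambles on a non-empty set $\mathcal{X}$ are bounded real functions; $\mathcal{G}(\mathcal{X})$ is the set of gambles, $\mathcal{G}_{>0}(\mathcal{X})$ the non-negative non-zero gambles, $\mathbb{I}_A$ the indicator of $A$. For $\mathcal{A}\subseteq\mathcal{G}(\mathcal{X})$: $\mathrm{posi}(\mathcal{A}):=\{\sum_{i=1}^n\lambda_if_i\colon n\in\mathbb{N},\lambda_i>0,f_i\in\mathcal{A}\}$, $\mathcal{E}(\mathcal{A}):=\mathrm{posi}(\mathcal{A}\cup\mathcal{G}_{>0}(\mathcal{X}))$. A coherent set of desirable gambles $\mathcal{D}\subseteq\mathcal{G}(\mathcal{X})$ satisfies: (D1) $f\geq0,f\neq0\Rightarrow f\in\mathcal{D}$; (D2) $f\in\mathcal{D},\lambda>0\Rightarrow\lambda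 f\in\mathcal{D}$; (D3) $f,g\in\mathcal{D}\Rightarrow f+g\in\mathcal{D}$; (D4) $f\leq0\Rightarrow f\notin\mathcal{D}$. $\mathcal{C}(\mathcal{X}):=\mathcal{G}(\mathcal{X})\times(\mathcal{P}(\mathcal{X})\setminus\{\emptyset\})$; a conditional lower prevision on $\mathcal{C}\subseteq\mathcal{C}(\mathcal{X})$ is a map $(f,B)\mapsto\underline{P}(f\vert B)\in\mathbb{R}\cup\{\pm\infty\}$. For $\mathcal{D}\subseteq\mathcal{G}(\mathcal{X})$, $\underline{P}_{\mathcal{D}}(f\vert B):=\sup\{\mu\in\mathbb{R}\colon[f-\mu]\mathbb{I}_B\in\mathcal{D}\}$. $\underline{P}$ is coherent if $\underline{P}=\underline{P}_{\mathcal{D}}$ on its domain for some coherent set of desirable gambles $\mathcal{D}$. For coherent $\underline{P}$ on $\mathcal{C}$, $\mathcal{E}(\underline{P}):=\mathcal{E}(\{[f-\mu]\mathbb{I}_B\colon(f,B)\in\mathcal{C},\mu<\underline{P}(f\vert B)\})$ and its natural extension is $\underline{E}(f\vert B):=\underline{P}_{\mathcal{E}(\underline{P})}(f\vert B)$ for all $(f,B)\in\mathcal{C}(\mathcal{X})$. Unconditional notation: $\underline{P}(f):=\underline{P}(f\vert\mathcal{X})$. Gambles on $\mathcal{X}_i$ are identified with their cylindrical extensions to $\mathcal{X}_1\times\mathcal{X}_2$, events $B\subseteq\mathcal{X}_1$ with $B\times\mathcal{X}_2$ (similarly for $\mathcal{X}_2$). For coherent sets of desirable gambles $\mathcal{D}_1,\mathcal{D}_2$: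 $\mathcal{D}_1\otimes\mathcal{D}_2:=\mathcal{E}(\mathcal{A}_{1\to2}\cup\mathcal{A}_{2\to1})$, $\mathcal{A}_{1\to2}:=\{f_2(X_2)\mathbb{I}_{B_1}(X_1)\colon f_2\in\mathcal{D}_2,B_1\in\mathcal{B}_1\cup\{\mathcal{X}_1\}\}$, $\mathcal{A}_{2\to1}:=\{f_1(X_1)\mathbb{I}_{B_2}(X_2)\colon f_1\in\mathcal{D}_1,B_2\in\mathcal{B}_2\cup\{\mathcal{X}_2\}\}$. Then $(\underline{P}_1\otimes\underline{P}_2)(f\vert B):=\underline{P}_{\mathcal{D}}(f\vert B)$ for $(f,B)\in\mathcal{C}(\mathcal{X}_1\times\mathcal{X}_2)$ with $\mathcal{D}=\mathcal{E}(\underline{P}_1)\otimes\mathcal{E}(\underline{P}_2)$. *)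

From Stdlib Require Import Reals ClassicalEpsilon.
From Coquelicot Require Import Rbar Lub.
Open Scope R_scope.

Definition is_gamble {X : Type} (f : X -> R) : Prop :=
  exists M : R, forall x, Rabs (f x) <= M.

Definition indic {X : Type} (B : X -> Prop) (x : X) : R :=
  if excluded_middle_informative (B x) then 1 else 0.

Definition fullset {X : Type} : X -> Prop := fun _ => True.

Definition Gpos {X : Type} (f : X -> R) : Prop :=
  is_gamble f /\ (forall x, 0 <= f x) /\ (exists x, f x <> 0).

Definition posi {X : Type} (A : (X -> R) -> Prop) (g : X -> R) : Prop :=
  exists (n : nat) (lam : nat -> R) (fs : nat -> X -> R),
    (forall i, (i <= n)%nat -> 0 < lam i /\ A (fs i)) /\
    (forall x, g x = sum_f_R0 (fun i => lam i * fs i x) n).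

Definition Ext {X : Type} (A : (X -> R) -> Prop) : (X -> R) -> Prop :=
  posi (fun f => A f \/ Gpos f).

Definition coherent_D {X : Type} (D : (X -> R) -> Prop) : Prop :=
  (forall f, D f -> is_gamble f) /\
  (forall f, is_gamble f -> (forall x, 0 <= f x) -> (exists x, f x <> 0) -> D f) /\
  (forall f lam, D f -> 0 < lam -> D (fun x => lam * f x)) /\
  (forall f g, D f -> D g -> D (fun x => f x + g x)) /\
  (forall f, (forall x, f x <= 0) -> ~ D f).

(* P_D(f|B) = sup { mu in R : [f - mu] I_B in D } (sup of empty set = -oo) *)
Definition lowprev_of {X : Type} (D : (X -> R) -> Prop) (f : X -> R) (B : X -> Prop)
  : Rbar :=
  Lub_Rbar (fun mu : R => D (fun x => (f x - mu) * indic B x)).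

Definition domain_ok {X : Type} (C : (X -> R) -> (X -> Prop) -> Prop) : Prop :=
  forall f B, C f B -> is_gamble f /\ exists x, B x.

Definition coherent_P {X : Type} (C : (X -> R) -> (X -> Prop) -> Prop)
  (P : (X -> R) -> (X -> Prop) -> Rbar) : Prop :=
  exists D, coherent_D D /\ forall f B, C f B -> P f B = lowprev_of D f B.

Definition ExtP {X : Type} (C : (X -> R) -> (X -> Prop) -> Prop)
  (P : (X -> R) -> (X -> Prop) -> Rbar) : (X -> R) -> Prop :=
  Ext (fun g => exists f B (mu : R),
         C f B /\ Rbar_lt (Finite mu) (P f B) /\
         g = (fun x => (f x - mu) * indic B x)).

Definition natext {X : Type} (C : (X -> R) -> (X -> Prop) -> Prop)
  (P : (X -> R) -> (X -> Prop) -> Rbar) (f : X -> R) (B : X -> Prop) : Rbar :=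
  lowprev_of (ExtP C P) f B.

Definition A12 {X1 X2 : Type} (Bs1 : (X1 -> Prop) -> Prop)
  (D2 : (X2 -> R) -> Prop) : (X1 * X2 -> R) -> Prop :=
  fun g => exists f2 B1, D2 f2 /\ (Bs1 B1 \/ (forall x, B1 x)) /\
    g = (fun z => f2 (snd z) * indic B1 (fst z)).

Definition A21 {X1 X2 : Type} (Bs2 : (X2 -> Prop) -> Prop)
  (D1 : (X1 -> R) -> Prop) : (X1 * X2 -> R) -> Prop :=
  fun g => exists f1 B2, D1 f1 /\ (Bs2 B2 \/ (forall x, B2 x)) /\
    g = (fun z => f1 (fst z) * indic B2 (snd z)).

Definition Dprod {X1 X2 : Type} (Bs1 : (X1 -> Prop) -> Prop)
  (Bs2 : (X2 -> Prop) -> Prop) (D1 : (X1 -> R) -> Prop) (D2 : (X2 -> R) -> Prop)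
  : (X1 * X2 -> R) -> Prop :=
  Ext (fun g => A12 Bs1 D2 g \/ A21 Bs2 D1 g).

Definition prodP {X1 X2 : Type} (Bs1 : (X1 -> Prop) -> Prop)
  (Bs2 : (X2 -> Prop) -> Prop)
  (C1 : (X1 -> R) -> (X1 -> Prop) -> Prop) (P1 : (X1 -> R) -> (X1 -> Prop) -> Rbar)
  (C2 : (X2 -> R) -> (X2 -> Prop) -> Prop) (P2 : (X2 -> R) -> (X2 -> Prop) -> Rbar)
  (f : X1 * X2 -> R) (B : X1 * X2 -> Prop) : Rbar :=
  lowprev_of (Dprod Bs1 Bs2 (ExtP C1 P1) (ExtP C2 P2)) f B.

From Stdlib Require Import Reals.
From Coquelicot Require Import Rbar.
From Stdlib Require Import Lra Lia List RList Classical ClassicalEpsilon FunctionalExtensionality.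
From Coquelicot Require Import Lub.
Open Scope R_scope.

(* The inequality [>=] holds because [(f - a) + (h - c)] is the sum of two
   generators of the product whenever [f - a] and [h - c] are desirable.
   Conversely, a gamble [f + h - mu] of [E(P1) ⊗ E(P2)] dominates a finite sum
   [sum_i u_i(y) I_{B_i}(x) + sum_j v_j(x) I_{C_j}(y)] with [u_i] and [v_j]
   desirable. The finitely many events involved split both spaces into finitely
   many atoms; for atoms [r] and [q], let [u_r] be the sum of the [u_i] with
   [r ⊆ B_i] and [v_q] that of the [v_j] with [q ⊆ C_j]. A constant [c r q]
   separates [u_r - h] on [q] from [f - v_q] on [r], and Gordan's theorem of
   the alternative for the finite matrix [c] averages either the [v_q] into a
   desirable minorant of [f - a + eps] or the [u_r] into one of
   [h - (mu - a) + eps]; hence [mu <= E1(f) + E2(h)]. *)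

(** * A theorem of the alternative *)

Lemma MaxRlist_lt (l : list R) u : l <> nil -> (forall x, In x l -> x < u) -> MaxRlist l < u.
Proof.
  intros Hl Hu; apply Hu, MaxRlist_P2.
  destruct l as [|x l]; [congruence|exists x; left; reflexivity].
Qed.

(* One step of Fourier-Motzkin elimination: [t] must lie above every [a / -b]
   with [b < 0] and below every [-a / b] with [b > 0]. *)
Lemma exists_nonneg_multiplier (l : list (R * R)) :
  (forall p, In p l -> 0 <= snd p -> fst p < 0) ->
  (forall p n, In p l -> In n l -> 0 <= snd p -> snd n < 0 ->
     snd p * fst n - snd n * fst p < 0) ->
  exists t, 0 <= t /\ forall p, In p l -> fst p + t * snd p < 0.
Proof.
  intros Hnn Hpair.
  set (lower := fun p : R * R => if Rlt_dec (snd p) 0 then fst p / - snd p else 0).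
  set (lo := MaxRlist (0 :: map lower l)).
  assert (Hlo0 : 0 <= lo) by (apply MaxRlist_P1; left; reflexivity).
  assert (Hlower : forall n, In n l -> lower n <= lo).
  { intros n Hn; apply MaxRlist_P1; right; apply in_map; exact Hn. }
  assert (Hupper : forall p, In p l -> 0 < snd p -> lo < - fst p / snd p).
  { intros p Hp Hpos; apply MaxRlist_lt; [discriminate|].
    assert (Hu0 : 0 < - fst p / snd p).
    { apply Rdiv_lt_0_compat; [specialize (Hnn p Hp (Rlt_le _ _ Hpos))|]; lra. }
    intros y [<-|Hy]; [exact Hu0|].
    apply in_map_iff in Hy as [n [<- Hn]]; unfold lower.
    destruct (Rlt_dec (snd n) 0) as [Hneg|]; [|exact Hu0].
    specialize (Hpair p n Hp Hn (Rlt_le _ _ Hpos) Hneg).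
    assert (E : (- fst p / snd p - fst n / - snd n) * (snd p * - snd n)
                = - (snd p * fst n - snd n * fst p)) by (field; lra).
    assert (Hpn : 0 < snd p * - snd n) by nra.
    cut (0 < - fst p / snd p - fst n / - snd n); [lra|].
    revert E; generalize (- fst p / snd p - fst n / - snd n); intros diff E; nra. }
  set (gap := fun p : R * R => if Rlt_dec 0 (snd p) then - fst p / snd p - lo else 1).
  set (delta := MinRlist (1 :: map gap l) / 2).
  assert (Hdelta : 0 < delta).
  { apply Rdiv_lt_0_compat; [|lra]; apply MinRlist_P2.
    intros y [<-|Hy]; [lra|]; apply in_map_iff in Hy as [p [<- Hp]]; unfold gap.
    destruct (Rlt_dec 0 (snd p)) as [Hpos|]; [specialize (Hupper p Hp Hpos)|]; lra. }
  assert (Hdelta_gap : forall p, In p l -> delta < gap p).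
  { intros p Hp; assert (MinRlist (1 :: map gap l) <= gap p).
    { apply MinRlist_P1; right; apply in_map; exact Hp. }
    destruct (Rlt_dec 0 (snd p)) as [Hpos|] eqn:Hsign;
      [specialize (Hupper p Hp Hpos)|]; unfold delta, gap in *; rewrite Hsign in *; lra. }
  exists (lo + delta); split; [lra|].
  intros p Hp; destruct (Rtotal_order (snd p) 0) as [Hneg|[Hz|Hpos]].
  - specialize (Hlower p Hp); unfold lower in Hlower.
    destruct (Rlt_dec (snd p) 0); [|lra].
    assert (fst p / - snd p * - snd p = fst p) by (field; lra).
    nra.
  - rewrite Hz; specialize (Hnn p Hp (Req_le _ _ (eq_sym Hz))); lra.
  - specialize (Hdelta_gap p Hp); unfold gap in Hdelta_gap.
    destruct (Rlt_dec 0 (snd p)); [|lra].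
    assert (- fst p / snd p * snd p = - fst p) by (field; lra).
    nra.
Qed.

Definition dot (m : nat) (k w : nat -> R) : R := sum_f_R0 (fun s => k s * w s) m.

Lemma dot_lin m k a b v w :
  dot m k (fun s => a * v s + b * w s) = a * dot m k v + b * dot m k w.
Proof. unfold dot; induction m; simpl; [|rewrite IHm]; ring. Qed.

Lemma dot_extend m k t w :
  dot (S m) (fun s => if Nat.eqb s (S m) then t else k s) w = dot m k w + t * w (S m).
Proof.
  unfold dot; simpl; rewrite Nat.eqb_refl; f_equal.
  apply sum_eq; intros s Hs; destruct (Nat.eqb_spec s (S m)); [lia|reflexivity].
Qed.

Lemma dot_extend_neg m k (L : list (nat -> R)) :
  (forall s, 0 <= k s) ->
  (forall w, In w L -> 0 <= w (S m) -> dot m k w < 0) ->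
  (forall p n, In p L -> In n L -> 0 <= p (S m) -> n (S m) < 0 ->
     p (S m) * dot m k n - n (S m) * dot m k p < 0) ->
  exists k', (forall s, 0 <= k' s) /\ forall w, In w L -> dot (S m) k' w < 0.
Proof.
  intros Hk Hnn Hpair.
  destruct (exists_nonneg_multiplier (map (fun w => (dot m k w, w (S m))) L)) as [t [Ht Hlt]].
  - intros pr Hp; apply in_map_iff in Hp as [p [<- Hp]]; apply Hnn, Hp.
  - intros pr nr Hp Hn; apply in_map_iff in Hp as [p [<- Hp]].
    apply in_map_iff in Hn as [n [<- Hn]]; apply Hpair; assumption.
  - exists (fun s => if Nat.eqb s (S m) then t else k s); split.
    + intros s; destruct (Nat.eqb s (S m)); auto.
    + intros w Hw; rewrite dot_extend.
      apply (Hlt (dot m k w, w (S m))), (in_map (fun w => (dot m k w, w (S m)))), Hw.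
Qed.

Lemma In_filter_dec {A} (P : A -> Prop) (dec : forall a, {P a} + {~ P a}) l a :
  In a (filter (fun a => if dec a then true else false) l) <-> In a l /\ P a.
Proof. rewrite filter_In; destruct (dec a); intuition discriminate. Qed.

(* Gordan's theorem of the alternative, by Fourier-Motzkin elimination of the
   last coordinate. *)
Lemma cone_alternative m (K : (nat -> R) -> Prop) (L : list (nat -> R)) :
  (forall a b v w, 0 <= a -> 0 < b -> K v -> K w -> K (fun s => a * v s + b * w s)) ->
  (forall w, In w L -> K w) ->
  (exists w, K w /\ forall s, (s <= m)%nat -> 0 <= w s) \/
  (exists k, (forall s, 0 <= k s) /\ forall w, In w L -> dot m k w < 0).
Proof.
  revert K L; induction m as [|m IH]; intros K L HK HL.
  - destruct (classic (exists w, In w L /\ 0 <= w 0%nat)) as [[w [Hw Hw0]]|Hneg].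
    + left; exists w; split; [auto|]; intros s Hs; replace s with 0%nat by lia; exact Hw0.
    + right; exists (fun _ => 1); split; [intros; lra|].
      intros w Hw; unfold dot; simpl.
      destruct (Rle_dec 0 (w 0%nat)); [exfalso; eauto|lra].
  - set (Z := filter (fun w => if Rle_dec 0 (w (S m)) then true else false) L).
    set (N := filter (fun w => if Rlt_dec (w (S m)) 0 then true else false) L).
    set (combo := fun pn : (nat -> R) * (nat -> R) =>
           fun s => fst pn (S m) * snd pn s + - snd pn (S m) * fst pn s).
    set (K' := fun w => K w /\ 0 <= w (S m)).
    assert (HZ : forall w, In w Z <-> In w L /\ 0 <= w (S m))
      by (intros; apply (In_filter_dec (fun w => 0 <= w (S m)))).
    assert (HN : forall w, In w N <-> In w L /\ w (S m) < 0)
      by (intros; apply (In_filter_dec (fun w => w (S m) < 0))).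
    assert (HK' : forall a b v w, 0 <= a -> 0 < b -> K' v -> K' w ->
                  K' (fun s => a * v s + b * w s)).
    { intros a b v w Ha Hb [Hv Hv'] [Hw Hw']; split; [auto|nra]. }
    assert (HL' : forall w, In w (Z ++ map combo (list_prod Z N)) -> K' w).
    { intros w Hw; apply in_app_iff in Hw as [Hw|Hw].
      - apply HZ in Hw as [Hw Hw']; split; auto.
      - apply in_map_iff in Hw as [[p n] [<- Hpn]].
        apply in_prod_iff in Hpn as [Hp Hn]; apply HZ in Hp; apply HN in Hn.
        unfold combo; simpl; split; [apply HK; try lra; apply HL; tauto|apply Req_le; ring]. }
    destruct (IH K' _ HK' HL') as [[w [[Hw Hlast] Hnn]]|[k [Hk Hneg]]].
    + left; exists w; split; [exact Hw|].
      intros s Hs; destruct (Nat.eq_dec s (S m)) as [->|]; [exact Hlast|apply Hnn; lia].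
    + right; apply (dot_extend_neg m k L Hk).
      * intros w Hw Hw'; apply Hneg, in_app_iff; left; apply HZ; auto.
      * intros p n Hp Hn Hp' Hn'.
        replace (p (S m) * dot m k n - n (S m) * dot m k p) with (dot m k (combo (p, n)))
          by (unfold combo; rewrite dot_lin; simpl; ring).
        apply Hneg, in_app_iff; right; apply in_map, in_prod; [apply HZ|apply HN]; auto.
Qed.

Lemma separating_real (A B : R -> Prop) :
  (exists a, A a) -> (exists b, B b) -> (forall a b, A a -> B b -> a <= b) ->
  {c | (forall a, A a -> a <= c) /\ (forall b, B b -> c <= b)}.
Proof.
  intros HA HB Hab.
  assert (Hbound : bound A).
  { destruct HB as [b0 Hb0]; exists b0; intros a Ha; exact (Hab a b0 Ha Hb0). }
  destruct (completeness A Hbound HA) as [c [Hub Hleast]].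
  exists c; split; [exact Hub|intros b Hb; apply Hleast; intros a Ha; exact (Hab a b Ha Hb)].
Qed.

(** * Coherent sets of desirable gambles *)

Lemma indic_fullset {X} (x : X) : indic fullset x = 1.
Proof. unfold indic; destruct excluded_middle_informative as [|n]; [|exfalso; apply n]; easy. Qed.

Lemma indic_in {X} (B : X -> Prop) x : B x -> indic B x = 1.
Proof. unfold indic; destruct excluded_middle_informative; tauto. Qed.

Lemma indic_ge0 {X} (B : X -> Prop) x : 0 <= indic B x.
Proof. unfold indic; destruct excluded_middle_informative; lra. Qed.

Lemma indic_eq_iff {X} (B : X -> Prop) x y : (B x <-> B y) -> indic B x = indic B y.
Proof. unfold indic; do 2 destruct excluded_middle_informative; tauto. Qed.

Lemma is_gamble_indic {X} (B : X -> Prop) : is_gamble (indic B).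
Proof.
  exists 1; intros x; unfold indic; destruct excluded_middle_informative;
    [rewrite Rabs_R1|rewrite Rabs_R0]; lra.
Qed.

Lemma is_gamble_const {X} (c : R) : is_gamble (fun _ : X => c).
Proof. exists (Rabs c); intros; lra. Qed.

Lemma is_gamble_add {X} (g g' : X -> R) :
  is_gamble g -> is_gamble g' -> is_gamble (fun x => g x + g' x).
Proof.
  intros [M HM] [M' HM']; exists (M + M'); intros x.
  eapply Rle_trans; [apply Rabs_triang|]; specialize (HM x); specialize (HM' x); lra.
Qed.

Lemma is_gamble_scale {X} (g : X -> R) a : is_gamble g -> is_gamble (fun x => a * g x).
Proof.
  intros [M HM]; exists (Rabs a * M); intros x; rewrite Rabs_mult.
  apply Rmult_le_compat_l; [apply Rabs_pos|apply HM].
Qed.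

Lemma pred_fun_ext {X} (D : (X -> R) -> Prop) g g' :
  D g -> (forall x, g x = g' x) -> D g'.
Proof. intros Hg E; replace g' with g; [exact Hg|apply functional_extensionality, E]. Qed.

Definition desirable0 {X} (D : (X -> R) -> Prop) (g : X -> R) : Prop :=
  D g \/ forall x, g x = 0.

Section Coherent.
Context {X : Type} (D : (X -> R) -> Prop) (HD : coherent_D D).

Lemma desirable_gamble g : D g -> is_gamble g.
Proof. apply HD. Qed.

Lemma desirable_pos g : is_gamble g -> (forall x, 0 <= g x) -> (exists x, g x <> 0) -> D g.
Proof. apply HD. Qed.

Lemma desirable_scale g a : D g -> 0 < a -> D (fun x => a * g x).
Proof. apply HD. Qed.

Lemma desirable_add g g' : D g -> D g' -> D (fun x => g x + g' x).
Proof. apply HD. Qed.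

Lemma not_desirable_nonpos g : (forall x, g x <= 0) -> ~ D g.
Proof. apply HD. Qed.

Lemma desirable0_gamble g : desirable0 D g -> is_gamble g.
Proof.
  intros [Hg|Hg]; [exact (desirable_gamble g Hg)|].
  exists 0; intros x; rewrite Hg, Rabs_R0; lra.
Qed.

Lemma desirable0_scale g a : desirable0 D g -> 0 <= a -> desirable0 D (fun x => a * g x).
Proof.
  intros Hg Ha; destruct (Req_dec a 0) as [->|Ha0]; [right; intros; ring|].
  destruct Hg as [Hg|Hg]; [left; apply desirable_scale; [exact Hg|lra]|].
  right; intros x; rewrite Hg; ring.
Qed.

Lemma desirable0_add g g' :
  desirable0 D g -> desirable0 D g' -> desirable0 D (fun x => g x + g' x).
Proof.
  intros [Hg|Hg] [Hg'|Hg'].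
  - left; apply desirable_add; assumption.
  - left; apply (pred_fun_ext D g); [exact Hg|intros x; rewrite Hg'; ring].
  - left; apply (pred_fun_ext D g'); [exact Hg'|intros x; rewrite Hg; ring].
  - right; intros x; rewrite Hg, Hg'; ring.
Qed.

Lemma desirable0_sum (phi : nat -> X -> R) (k : nat -> R) m :
  (forall s, 0 <= k s) -> (forall s, (s <= m)%nat -> desirable0 D (phi s)) ->
  desirable0 D (fun x => sum_f_R0 (fun s => k s * phi s x) m).
Proof.
  intros Hk Hphi; induction m as [|m IH]; simpl.
  - apply desirable0_scale; [apply Hphi; lia|apply Hk].
  - apply (desirable0_add (fun x => sum_f_R0 (fun s => k s * phi s x) m)).
    + apply IH; intros; apply Hphi; lia.
    + apply desirable0_scale; [apply Hphi; lia|apply Hk].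
Qed.

Lemma not_desirable0_neg (x0 : X) g : desirable0 D g -> ~ (forall x, g x < 0).
Proof.
  intros [Hg|Hg] Hneg.
  - exact (not_desirable_nonpos g (fun x => Rlt_le _ _ (Hneg x)) Hg).
  - specialize (Hneg x0); rewrite Hg in Hneg; lra.
Qed.

(* [alpha * (G + eps) = Phi + (alpha * G - Phi + alpha * eps)], with the last
   summand positive. *)
Lemma desirable_shift_of_dominates (x0 : X) G Phi alpha eps :
  is_gamble G -> desirable0 D Phi -> 0 < alpha -> 0 < eps ->
  (forall x, Phi x <= alpha * G x) -> D (fun x => G x + eps).
Proof.
  intros HG HPhi Ha He Hle.
  pose proof (Rmult_lt_0_compat _ _ Ha He) as Hae.
  assert (Hrest : D (fun x => alpha * G x - Phi x + alpha * eps)).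
  { apply desirable_pos.
    - apply is_gamble_add; [|apply is_gamble_const].
      apply (pred_fun_ext is_gamble (fun x => alpha * G x + -1 * Phi x)); [|intros; ring].
      apply is_gamble_add; apply is_gamble_scale; [exact HG|exact (desirable0_gamble Phi HPhi)].
    - intros x; specialize (Hle x); lra.
    - exists x0; specialize (Hle x0); lra. }
  assert (Hscaled : D (fun x => alpha * (G x + eps))).
  { destruct HPhi as [HPhi|HPhi].
    - apply (pred_fun_ext D _ _ (desirable_add _ _ HPhi Hrest)); intros x; ring.
    - apply (pred_fun_ext D _ _ Hrest); intros x; rewrite HPhi; ring. }
  apply (pred_fun_ext D _ _ (desirable_scale _ (/ alpha) Hscaled (Rinv_0_lt_compat _ Ha))).
  intros x; field; lra.
Qed.

End Coherent.

Lemma posi_add {X} (A : (X -> R) -> Prop) g g' :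
  posi A g -> posi A g' -> posi A (fun x => g x + g' x).
Proof.
  intros [n [lam [fs [Hn Hg]]]] [n' [lam' [fs' [Hn' Hg']]]].
  exists (n + S n')%nat, (fun i => if Nat.leb i n then lam i else lam' (i - S n)%nat),
    (fun i => if Nat.leb i n then fs i else fs' (i - S n)%nat); split.
  - intros i Hi; destruct (Nat.leb_spec i n); [apply Hn; auto|apply Hn'; lia].
  - intros x; rewrite (tech2 _ n (n + S n')) by lia.
    replace (n + S n' - S n)%nat with n' by lia.
    rewrite Hg, Hg'; f_equal; apply sum_eq; intros i Hi.
    + destruct (Nat.leb_spec i n); [reflexivity|lia].
    + destruct (Nat.leb_spec (S n + i) n); [lia|].
      replace (S n + i - S n)%nat with i by lia; reflexivity.
Qed.

Lemma posi_scale {X} (A : (X -> R) -> Prop) g a :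
  posi A g -> 0 < a -> posi A (fun x => a * g x).
Proof.
  intros [n [lam [fs [Hn Hg]]]] Ha; exists n, (fun i => a * lam i), fs; split.
  - intros i Hi; destruct (Hn i Hi); split; [apply Rmult_lt_0_compat|]; assumption.
  - intros x; rewrite Hg, scal_sum; apply sum_eq; intros; ring.
Qed.

Lemma posi_base {X} (A : (X -> R) -> Prop) g : A g -> posi A g.
Proof.
  intros Hg; exists 0%nat, (fun _ => 1), (fun _ => g); split.
  - intros; split; [lra|exact Hg].
  - intros; simpl; ring.
Qed.

Lemma posi_incl {X} (A D : (X -> R) -> Prop) :
  (forall g g', D g -> D g' -> D (fun x => g x + g' x)) ->
  (forall g a, D g -> 0 < a -> D (fun x => a * g x)) ->
  (forall g, A g -> D g) -> forall g, posi A g -> D g.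
Proof.
  intros Hadd Hscale HA g [n [lam [fs [Hn Hg]]]].
  apply (pred_fun_ext D (fun x => sum_f_R0 (fun i => lam i * fs i x) n));
    [|intros; symmetry; apply Hg].
  clear Hg; induction n as [|n IH]; simpl.
  - apply Hscale; [apply HA|]; apply Hn; lia.
  - apply (Hadd (fun x => sum_f_R0 (fun i => lam i * fs i x) n)).
    + apply IH; intros; apply Hn; lia.
    + apply Hscale; [apply HA|]; apply Hn; lia.
Qed.

Lemma Ext_coherent {X} (A D : (X -> R) -> Prop) :
  coherent_D D -> (forall g, A g -> D g) -> coherent_D (Ext A).
Proof.
  intros HD HA.
  assert (Hincl : forall g, Ext A g -> D g).
  { apply posi_incl; [apply desirable_add, HD|apply desirable_scale, HD|].
    intros g [Hg|[Hg [Hpos Hnz]]]; [exact (HA g Hg)|exact (desirable_pos D HD g Hg Hpos Hnz)]. }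
  split; [|split; [|split; [|split]]].
  - intros g Hg; exact (desirable_gamble D HD g (Hincl g Hg)).
  - intros g Hg Hpos Hnz; apply posi_base; right; repeat split; assumption.
  - intros g a Hg Ha; apply posi_scale; assumption.
  - intros g g' Hg Hg'; apply posi_add; assumption.
  - intros g Hnp Hg; exact (not_desirable_nonpos D HD g Hnp (Hincl g Hg)).
Qed.

Lemma Lub_Rbar_gt (E : R -> Prop) mu :
  Rbar_lt (Finite mu) (Lub_Rbar E) -> exists x, E x /\ mu < x.
Proof.
  intros Hlt; apply NNPP; intros Hno.
  apply (Rbar_lt_not_le _ _ Hlt), (proj2 (Lub_Rbar_correct E)).
  intros x Hx; simpl; apply Rnot_lt_le; intros Hmu; apply Hno; exists x; auto.
Qed.

(* [mu < P(f|B)] yields a desirable [(f - mu') I_B] with [mu < mu'], and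
   [(f - mu) I_B] exceeds it by the positive gamble [(mu' - mu) I_B]. *)
Lemma ExtP_coherent {X} (C : (X -> R) -> (X -> Prop) -> Prop) P :
  domain_ok C -> coherent_P C P -> coherent_D (ExtP C P).
Proof.
  intros HC [D [HD HP]]; apply (Ext_coherent _ D HD).
  intros g [f [B [mu [HfB [Hlt ->]]]]].
  rewrite (HP f B HfB) in Hlt; destruct (HC f B HfB) as [_ [b Hb]].
  destruct (Lub_Rbar_gt _ _ Hlt) as [mu' [Hmu' Hlt']].
  apply (pred_fun_ext D (fun x => (f x - mu') * indic B x + (mu' - mu) * indic B x));
    [|intros; ring].
  apply (desirable_add D HD _ _ Hmu'), (desirable_pos D HD).
  - apply is_gamble_scale, is_gamble_indic.
  - intros x; apply Rmult_le_pos; [lra|apply indic_ge0].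
  - exists b; rewrite (indic_in B b Hb); lra.
Qed.

(** * The independent product *)

Fixpoint cond_sum {Y Z} (L : list ((Y -> R) * (Z -> Prop))) (y : Y) (z : Z) : R :=
  match L with
  | nil => 0
  | p :: L' => fst p y * indic (snd p) z + cond_sum L' y z
  end.

Lemma cond_sum_app {Y Z} (L L' : list ((Y -> R) * (Z -> Prop))) y z :
  cond_sum (L ++ L') y z = cond_sum L y z + cond_sum L' y z.
Proof. induction L as [|p L IH]; simpl; [|rewrite IH]; ring. Qed.

Lemma cond_sum_scale {Y Z} (L : list ((Y -> R) * (Z -> Prop))) a y z :
  cond_sum (map (fun p => (fun y => a * fst p y, snd p)) L) y z = a * cond_sum L y z.
Proof. induction L as [|p L IH]; simpl; [|rewrite IH]; ring. Qed.

Lemma desirable0_cond_sum {Y Z} (D : (Y -> R) -> Prop) (HD : coherent_D D)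
  (L : list ((Y -> R) * (Z -> Prop))) z :
  (forall p, In p L -> D (fst p)) -> desirable0 D (fun y => cond_sum L y z).
Proof.
  induction L as [|p L IH]; intros HL; simpl; [right; reflexivity|].
  apply (desirable0_add D HD (fun y => fst p y * indic (snd p) z)).
  - apply (pred_fun_ext (desirable0 D) (fun y => indic (snd p) z * fst p y));
      [|intros; ring].
    apply desirable0_scale; [exact HD|left; apply HL; left; reflexivity|apply indic_ge0].
  - apply IH; intros; apply HL; right; assumption.
Qed.

Definition agree {X} (Es : list (X -> Prop)) (x y : X) : Prop :=
  forall E, In E Es -> (E x <-> E y).

Lemma cond_sum_agree {Y Z} (L : list ((Y -> R) * (Z -> Prop))) y z z' :
  agree (map snd L) z z' -> cond_sum L y z = cond_sum L y z'.
Proof.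
  induction L as [|p L IH]; intros Hzz'; simpl; [reflexivity|].
  rewrite (indic_eq_iff (snd p) z z'), IH; [reflexivity| |].
  - intros E HE; apply Hzz'; right; exact HE.
  - apply Hzz'; left; reflexivity.
Qed.

(* [LU] lists the pairs [(u_i, B_i)] of generators [u_i(y) I_{B_i}(x)] of
   [A_{1->2}], and [LV] the pairs [(v_j, C_j)] of generators of [A_{2->1}]. *)
Definition dominates_tensor_sum {X1 X2} (D1 : (X1 -> R) -> Prop) (D2 : (X2 -> R) -> Prop)
  (g : X1 * X2 -> R) : Prop :=
  exists LU LV, (forall p, In p LU -> D2 (fst p)) /\ (forall p, In p LV -> D1 (fst p)) /\
    forall a b, cond_sum LU b a + cond_sum LV a b <= g (a, b).

Lemma Dprod_dominates {X1 X2} Bs1 Bs2 (D1 : (X1 -> R) -> Prop) (D2 : (X2 -> R) -> Prop)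
  (HD1 : coherent_D D1) (HD2 : coherent_D D2) g :
  Dprod Bs1 Bs2 D1 D2 g -> dominates_tensor_sum D1 D2 g.
Proof.
  apply posi_incl.
  - intros g1 g2 [LU1 [LV1 [HU1 [HV1 Hg1]]]] [LU2 [LV2 [HU2 [HV2 Hg2]]]].
    exists (LU1 ++ LU2), (LV1 ++ LV2); split; [|split].
    + intros p Hp; apply in_app_iff in Hp as [Hp|Hp]; auto.
    + intros p Hp; apply in_app_iff in Hp as [Hp|Hp]; auto.
    + intros a b; rewrite !cond_sum_app; specialize (Hg1 a b); specialize (Hg2 a b); simpl; lra.
  - intros g' c [LU [LV [HU [HV Hg]]]] Hc.
    exists (map (fun p => (fun y => c * fst p y, snd p)) LU),
      (map (fun p => (fun x => c * fst p x, snd p)) LV); split; [|split].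
    + intros p Hp; apply in_map_iff in Hp as [q [<- Hq]]; simpl; apply desirable_scale; auto.
    + intros p Hp; apply in_map_iff in Hp as [q [<- Hq]]; simpl; apply desirable_scale; auto.
    + intros a b; rewrite !cond_sum_scale, <- Rmult_plus_distr_l.
      apply Rmult_le_compat_l; [lra|apply Hg].
  - intros g' [[[f2 [B1 [Hf2 [_ ->]]]]|[f1 [B2 [Hf1 [_ ->]]]]]|[_ [Hpos _]]].
    + exists ((f2, B1) :: nil), nil; split; [|split]; [|intros p []|].
      * intros p [<-|[]]; exact Hf2.
      * intros a b; simpl; lra.
    + exists nil, ((f1, B2) :: nil); split; [|split]; [intros p []| |].
      * intros p [<-|[]]; exact Hf1.
      * intros a b; simpl; lra.
    + exists nil, nil; split; [|split]; [intros p []|intros p []|].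
      intros a b; simpl; rewrite Rplus_0_r; apply Hpos.
Qed.

Lemma Dprod_sum_mem {X1 X2} Bs1 Bs2 (D1 : (X1 -> R) -> Prop) (D2 : (X2 -> R) -> Prop) f h a c :
  D1 (fun x => f x - a) -> D2 (fun y => h y - c) ->
  Dprod Bs1 Bs2 D1 D2 (fun z => f (fst z) + h (snd z) - (a + c)).
Proof.
  intros Hf Hh.
  apply (pred_fun_ext _ (fun z => (f (fst z) - a) * indic fullset (snd z)
                                  + (h (snd z) - c) * indic fullset (fst z)));
    [|intros z; rewrite !indic_fullset; ring].
  apply posi_add; apply posi_base; left.
  - right; exists (fun x => f x - a), fullset; repeat split; [exact Hf|right; easy].
  - left; exists (fun y => h y - c), fullset; repeat split; [exact Hh|right; easy].
Qed.

Lemma agree_representatives {X} (x0 : X) (Es : list (X -> Prop)) :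
  exists Rs : list X, forall x, exists r, In r Rs /\ agree Es x r.
Proof.
  induction Es as [|E Es [Rs HRs]].
  - exists (x0 :: nil); intros x; exists x0; split; [left; reflexivity|intros E []].
  - set (pick := fun r (b : Prop) =>
                   epsilon (inhabits r) (fun y => agree Es y r /\ (E y <-> b))).
    exists (flat_map (fun r => pick r True :: pick r False :: nil) Rs).
    intros x; destruct (HRs x) as [r [Hr Hxr]].
    assert (Hpick : forall b, (E x <-> b) -> agree (E :: Es) x (pick r b)).
    { intros b Hb.
      destruct (epsilon_spec (inhabits r) (fun y => agree Es y r /\ (E y <-> b))
                  (ex_intro _ x (conj Hxr Hb))) as [Hy HEy].
      intros E' [<-|HE']; [fold (pick r b) in HEy; tauto|].
      fold (pick r b) in Hy; rewrite (Hxr E' HE'), (Hy E' HE'); tauto. }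
    destruct (classic (E x)) as [HE|HE]; [exists (pick r True)|exists (pick r False)];
      (split; [apply in_flat_map; exists r; split; [exact Hr|simpl; tauto]|apply Hpick; tauto]).
Qed.

Lemma agree_refl {X} (Es : list (X -> Prop)) x : agree Es x x.
Proof. intros E _; reflexivity. Qed.

Section TensorSplit.
Variables (X1 X2 : Type) (x1 : X1) (x2 : X2).
Variables (D1 : (X1 -> R) -> Prop) (D2 : (X2 -> R) -> Prop).
Hypotheses (HD1 : coherent_D D1) (HD2 : coherent_D D2).
Variables (F : X1 -> R) (H : X2 -> R).
Hypotheses (HF : is_gamble F) (HH : is_gamble H).
Variables (LU : list ((X2 -> R) * (X1 -> Prop))) (LV : list ((X1 -> R) * (X2 -> Prop))).
Hypotheses (HU : forall p, In p LU -> D2 (fst p)) (HV : forall p, In p LV -> D1 (fst p)).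
Hypothesis Hdom : forall a b, cond_sum LU b a + cond_sum LV a b <= F a + H b.

Let agree1 := agree (map snd LU).
Let agree2 := agree (map snd LV).

Lemma atom_bound a b r q :
  agree1 a r -> agree2 b q -> cond_sum LU b r + cond_sum LV a q <= F a + H b.
Proof.
  intros Har Hbq.
  rewrite <- (cond_sum_agree LU b a r Har), <- (cond_sum_agree LV a b q Hbq); apply Hdom.
Qed.

Lemma atom_constant r q :
  {c | (forall b, agree2 b q -> cond_sum LU b r - H b <= c) /\
       (forall a, agree1 a r -> c <= F a - cond_sum LV a q)}.
Proof.
  destruct (separating_real (fun y => exists b, agree2 b q /\ y = cond_sum LU b r - H b)
                            (fun y => exists a, agree1 a r /\ y = F a - cond_sum LV a q))
    as [c [Hlo Hup]].
  - exists (cond_sum LU q r - H q), q; split; [apply agree_refl|reflexivity].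
  - exists (F r - cond_sum LV r q), r; split; [apply agree_refl|reflexivity].
  - intros y y' [b [Hb ->]] [a [Ha ->]]; pose proof (atom_bound a b r q Ha Hb); lra.
  - exists c; split; [intros b Hb; apply Hlo|intros a Ha; apply Hup]; eauto.
Qed.

Section Atoms.
Variables (R1 : list X1) (R2 : list X2).
Hypotheses (HR1 : forall a, exists r, In r R1 /\ agree1 a r)
           (HR2 : forall b, exists q, In q R2 /\ agree2 b q).

Let m := pred (length R1).
Let row s := nth s R1 x1.
Let c r q := proj1_sig (atom_constant r q).

Lemma row_cover a : exists s, (s <= m)%nat /\ agree1 a (row s).
Proof.
  destruct (HR1 a) as [r [Hr Har]].
  destruct (In_nth R1 r x1 Hr) as [s [Hs Hrow]].
  exists s; split; [unfold m; lia|unfold row; rewrite Hrow; exact Har].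
Qed.

Definition row_minorant (w : nat -> R) : Prop :=
  exists alpha Phi, 0 < alpha /\ desirable0 D1 Phi /\
    forall s, (s <= m)%nat -> forall a, agree1 a (row s) -> w s <= alpha * F a - Phi a.

Lemma row_minorant_cone a b v w :
  0 <= a -> 0 < b -> row_minorant v -> row_minorant w ->
  row_minorant (fun s => a * v s + b * w s).
Proof.
  intros Ha Hb [al [Ph [Hal [HPh Hv]]]] [al' [Ph' [Hal' [HPh' Hw]]]].
  exists (a * al + b * al'), (fun x => a * Ph x + b * Ph' x); split; [|split].
  - nra.
  - apply desirable0_add; [exact HD1| |]; apply desirable0_scale; auto; lra.
  - intros s Hs x Hx; specialize (Hv s Hs x Hx); specialize (Hw s Hs x Hx); nra.
Qed.

Definition columns : list (nat -> R) := map (fun q s => c (row s) q) R2.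

Lemma columns_row_minorant w : In w columns -> row_minorant w.
Proof.
  intros Hw; apply in_map_iff in Hw as [q [<- Hq]].
  exists 1, (fun a => cond_sum LV a q); split; [lra|split].
  - apply desirable0_cond_sum; assumption.
  - intros s _ a Ha; pose proof (proj2 (proj2_sig (atom_constant (row s) q)) a Ha).
    unfold c; lra.
Qed.

Lemma nonneg_row_minorant_split w eps : 0 < eps ->
  row_minorant w -> (forall s, (s <= m)%nat -> 0 <= w s) -> D1 (fun a => F a + eps).
Proof.
  intros Heps [alpha [Phi [Ha [HPhi Hw]]]] Hnn.
  apply (desirable_shift_of_dominates D1 HD1 x1 F Phi alpha eps); auto.
  intros a; destruct (row_cover a) as [s [Hs Has]].
  specialize (Hw s Hs a Has); specialize (Hnn s Hs); lra.
Qed.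

Lemma row_weights_split k eps : 0 < eps ->
  (forall s, 0 <= k s) -> (forall w, In w columns -> dot m k w < 0) ->
  D2 (fun b => H b + eps).
Proof.
  intros Heps Hk Hneg.
  set (Psi := fun b => sum_f_R0 (fun s => k s * cond_sum LU b (row s)) m).
  set (Kt := sum_f_R0 k m).
  assert (HPsi : desirable0 D2 Psi).
  { apply (desirable0_sum D2 HD2 (fun s b => cond_sum LU b (row s))); [exact Hk|].
    intros s _; apply desirable0_cond_sum; assumption. }
  assert (HPsi_lt : forall b, Psi b < Kt * H b).
  { intros b; destruct (HR2 b) as [q [Hq Hbq]].
    assert (Hc := Hneg _ (in_map (fun q s => c (row s) q) R2 q Hq)); unfold dot in Hc.
    assert (Hle : sum_f_R0 (fun s => k s * (cond_sum LU b (row s) - H b)) m <=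
                  sum_f_R0 (fun s => k s * c (row s) q) m).
    { apply sum_Rle; intros s _; apply Rmult_le_compat_l; [apply Hk|].
      exact (proj1 (proj2_sig (atom_constant (row s) q)) b Hbq). }
    replace (sum_f_R0 (fun s => k s * (cond_sum LU b (row s) - H b)) m)
      with (Psi b - Kt * H b) in Hle
      by (unfold Psi, Kt; rewrite (Rmult_comm (sum_f_R0 k m)), scal_sum, <- minus_sum;
          apply sum_eq; intros; ring).
    lra. }
  assert (HKt : 0 <= Kt) by (apply cond_pos_sum, Hk).
  destruct (Req_dec Kt 0) as [HK0|HK0].
  - exfalso; apply (not_desirable0_neg D2 HD2 x2 Psi HPsi); intros b.
    specialize (HPsi_lt b); rewrite HK0, Rmult_0_l in HPsi_lt; exact HPsi_lt.
  - apply (desirable_shift_of_dominates D2 HD2 x2 H Psi Kt eps); auto; [lra|].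
    intros b; specialize (HPsi_lt b); lra.
Qed.

Lemma atoms_split eps : 0 < eps -> D1 (fun a => F a + eps) \/ D2 (fun b => H b + eps).
Proof.
  intros Heps.
  destruct (cone_alternative m row_minorant columns row_minorant_cone columns_row_minorant)
    as [[w [Hw Hnn]]|[k [Hk Hneg]]].
  - left; exact (nonneg_row_minorant_split w eps Heps Hw Hnn).
  - right; exact (row_weights_split k eps Heps Hk Hneg).
Qed.

End Atoms.

Lemma tensor_split eps : 0 < eps -> D1 (fun a => F a + eps) \/ D2 (fun b => H b + eps).
Proof.
  destruct (agree_representatives x1 (map snd LU)) as [R1 HR1].
  destruct (agree_representatives x2 (map snd LV)) as [R2 HR2].
  exact (atoms_split R1 R2 HR1 HR2 eps).
Qed.

End TensorSplit.

Lemma Dprod_sum_split {X1 X2} (x1 : X1) (x2 : X2) Bs1 Bs2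
  (D1 : (X1 -> R) -> Prop) (D2 : (X2 -> R) -> Prop) (HD1 : coherent_D D1) (HD2 : coherent_D D2)
  (F : X1 -> R) (H : X2 -> R) eps :
  is_gamble F -> is_gamble H -> 0 < eps ->
  Dprod Bs1 Bs2 D1 D2 (fun z => F (fst z) + H (snd z)) ->
  D1 (fun a => F a + eps) \/ D2 (fun b => H b + eps).
Proof.
  intros HF HH Heps Hprod.
  destruct (Dprod_dominates Bs1 Bs2 D1 D2 HD1 HD2 _ Hprod) as [LU [LV [HU [HV Hdom]]]].
  exact (tensor_split X1 X2 x1 x2 D1 D2 HD1 HD2 F H HF HH LU LV HU HV Hdom eps Heps).
Qed.

(** * Unconditional lower previsions *)

Lemma lowprev_fullset {X} (D : (X -> R) -> Prop) f :
  lowprev_of D f fullset = Lub_Rbar (fun mu => D (fun x => f x - mu)).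
Proof.
  unfold lowprev_of; apply Lub_Rbar_eqset; intros mu;
    split; intros Hmu; (eapply pred_fun_ext; [exact Hmu|]);
    intros x; cbv beta; rewrite indic_fullset; ring.
Qed.

Lemma lowprev_gamble_lub {X} (x0 : X) (D : (X -> R) -> Prop) (HD : coherent_D D) f :
  is_gamble f ->
  exists l, is_lub (fun mu => D (fun x => f x - mu)) l /\ exists mu, D (fun x => f x - mu).
Proof.
  intros [M HM].
  assert (Hbound : forall x, - M <= f x <= M).
  { intros x; specialize (HM x); pose proof (Rle_abs (f x)) as Hle;
    pose proof (Rle_abs (- f x)) as Hle'; rewrite Rabs_Ropp in Hle'; lra. }
  assert (Hne : exists mu, D (fun x => f x - mu)).
  { exists (- M - 1); apply (desirable_pos D HD).
    - exact (is_gamble_add f (fun _ => - (- M - 1)) (ex_intro _ M HM) (is_gamble_const _)).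
    - intros x; specialize (Hbound x); lra.
    - exists x0; specialize (Hbound x0); lra. }
  assert (Hub : bound (fun mu => D (fun x => f x - mu))).
  { exists M; intros mu Hmu; apply Rnot_lt_le; intros HMmu.
    refine (not_desirable_nonpos D HD _ _ Hmu); intros x; specialize (Hbound x); lra. }
  destruct (completeness _ Hub Hne) as [l Hl]; exists l; split; assumption.
Qed.

Lemma Lub_Rbar_is_lub (E : R -> Prop) l : (exists x, E x) -> is_lub E l -> Lub_Rbar E = Finite l.
Proof.
  intros [x0 Hx0] [Hub Hleast]; apply is_lub_Rbar_unique; split.
  - intros x Hx; exact (Hub x Hx).
  - intros [b| |] Hb; simpl; [apply Hleast; intros x Hx; exact (Hb x Hx)|exact I|].
    exact (Hb x0 Hx0).
Qed.

Lemma is_lub_sum (S1 S2 S12 : R -> Prop) l1 l2 :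
  is_lub S1 l1 -> is_lub S2 l2 ->
  (forall a c, S1 a -> S2 c -> S12 (a + c)) ->
  (forall mu a eps, S12 mu -> 0 < eps -> S1 (a - eps) \/ S2 (mu - a - eps)) ->
  is_lub S12 (l1 + l2).
Proof.
  intros [Hub1 Hleast1] [Hub2 Hleast2] Hsum Hsplit; split.
  - intros mu Hmu; apply Rnot_lt_le; intros Hgt.
    set (d := (mu - l1 - l2) / 4).
    destruct (Hsplit mu (l1 + 2 * d) d Hmu ltac:(unfold d; lra)) as [H1|H2].
    + specialize (Hub1 _ H1); unfold d in *; lra.
    + specialize (Hub2 _ H2); unfold d in *; lra.
  - intros b Hb.
    assert (Hl2 : l2 <= b - l1).
    { apply Hleast2; intros c Hc.
      cut (l1 <= b - c); [lra|]; apply Hleast1; intros a Ha.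
      specialize (Hb _ (Hsum a c Ha Hc)); lra. }
    lra.
Qed.

Theorem corollary23 (X1 X2 : Type) (x1 : X1) (x2 : X2)
  (Bs1 : (X1 -> Prop) -> Prop) (Bs2 : (X2 -> Prop) -> Prop)
  (hBs1 : forall B, Bs1 B -> exists x, B x)
  (hBs2 : forall B, Bs2 B -> exists x, B x)
  (C1 : (X1 -> R) -> (X1 -> Prop) -> Prop) (P1 : (X1 -> R) -> (X1 -> Prop) -> Rbar)
  (C2 : (X2 -> R) -> (X2 -> Prop) -> Prop) (P2 : (X2 -> R) -> (X2 -> Prop) -> Rbar)
  (hC1 : domain_ok C1) (hC2 : domain_ok C2)
  (hP1 : coherent_P C1 P1) (hP2 : coherent_P C2 P2)
  (f : X1 -> R) (h : X2 -> R) (hf : is_gamble f) (hh : is_gamble h) :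
  prodP Bs1 Bs2 C1 P1 C2 P2 (fun z => (f (fst z) + h (snd z))%R) fullset =
  Rbar_plus (natext C1 P1 f fullset) (natext C2 P2 h fullset).
Proof.
  pose proof (ExtP_coherent C1 P1 hC1 hP1) as HD1.
  pose proof (ExtP_coherent C2 P2 hC2 hP2) as HD2.
  unfold natext, prodP; rewrite !lowprev_fullset.
  destruct (lowprev_gamble_lub x1 _ HD1 f hf) as [l1 [Hl1 [a Ha]]].
  destruct (lowprev_gamble_lub x2 _ HD2 h hh) as [l2 [Hl2 [c Hc]]].
  rewrite (Lub_Rbar_is_lub _ l1 (ex_intro _ a Ha) Hl1),
    (Lub_Rbar_is_lub _ l2 (ex_intro _ c Hc) Hl2).
  rewrite (Lub_Rbar_is_lub _ (l1 + l2));
    [reflexivity|exists (a + c); apply Dprod_sum_mem; assumption|].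
  apply (is_lub_sum _ _ _ l1 l2 Hl1 Hl2); [intros; apply Dprod_sum_mem; assumption|].
  intros mu a' eps Hmu Heps.
  assert (Hshift : Dprod Bs1 Bs2 (ExtP C1 P1) (ExtP C2 P2)
                     (fun z => (f (fst z) - a') + (h (snd z) - (mu - a'))))
    by (eapply pred_fun_ext; [exact Hmu|intros; cbv beta; ring]).
  destruct (Dprod_sum_split x1 x2 Bs1 Bs2 _ _ HD1 HD2 _ _ eps
              (is_gamble_add f (fun _ => - a') hf (is_gamble_const _))
              (is_gamble_add h (fun _ => - (mu - a')) hh (is_gamble_const _)) Heps Hshift)
    as [Hf|Hh]; [left|right]; (eapply pred_fun_ext; [eassumption|intros; cbv beta; ring]).
Qed.
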